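(* Let $q$ be even and $n\ge2$. The unipotent conjugacy classes of type $(2,1,\dots,1)$ in $\mathbf{SL}_n(q)$ are not of type D.
   Context: Unipotent type = sizes of Jordan blocks; type $(2,1,\dots,1)$ means one block of size 2 and $n-2$ blocks of size 1. Conjugacy classes are racks with $x\triangleright y=xyx^{-1}$. A subrack $Y$ is decomposable if $Y=R\sqcup S$ with nonempty subracks $R,S$, $Y\triangleright R=R$, $Y\triangleright S=S$. Type D: a decomposable subrack $R\sqcup S$ with $r\in R,s\in S$ and $r\triangleright(s\triangleright(r\triangleright s))\neq s$. *)

From HB Require Import structures.
From mathcomp Require Import all_boot all_order all_algebra.
Set Implicit Arguments. Unset Strict Implicit. Unset Printing Implicit Defensive.
Import GRing.Theory.
Local Open Scope ring_scope.

Section Defs.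
Variables (F : finFieldType) (n : nat).
Local Notation M := 'M[F]_n.

Definition rtri (x y : M) : M := x *m y *m invmx x.

Definition SL : {set M} := [set g : M | \det g == 1].

Definition sl_class (x : M) : {set M} := [set rtri g x | g in SL].

(* unipotent of type (2,1,...,1): x - 1 is nilpotent with exactly one Jordan
   block of size 2 and all others of size 1, i.e. (x-1)^2 = 0 and rank(x-1)=1 *)
Definition unipotent_type21 (x : M) : bool :=
  ((x - 1%:M) *m (x - 1%:M) == 0) && (\rank (x - 1%:M) == 1%N).

Definition is_subrack (Y : {set M}) : Prop :=
  forall x y, x \in Y -> y \in Y -> rtri x y \in Y.

Definition rack_act (Y R : {set M}) : {set M} := [set rtri y r | y in Y, r in R].

Definition decomposable_as (Y R S : {set M}) : Prop :=
  [/\ Y = R :|: S, [disjoint R & S], R != set0 & S != set0] /\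
  [/\ is_subrack R, is_subrack S, rack_act Y R = R & rack_act Y S = S].

Definition type_D (X : {set M}) : Prop :=
  exists R S : {set M},
    [/\ R :|: S \subset X, is_subrack (R :|: S), decomposable_as (R :|: S) R S
      & exists r s, [/\ r \in R, s \in S & rtri r (rtri s (rtri r s)) != s]].
End Defs.

From HB Require Import structures.
From mathcomp Require Import all_boot all_order all_algebra all_fingroup all_solvable all_field.
From mathcomp Require Import ring.
Set Implicit Arguments. Unset Strict Implicit. Unset Printing Implicit Defensive.
Import GRing.Theory.
Local Open Scope ring_scope.

(* In characteristic 2 every element of the class is an involution r = 1 + A
   with A^2 = 0 and rank A = 1.  For two such elements r = 1 + A, s = 1 + B
   put l = tr (A B); rank one gives A B A = l A and B A B = l B, hence
   N = r s - 1 satisfies N^3 = l N + l N^2.  If l = 0 then (r s)^4 = 1, which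
   says exactly r |> (s |> (r |> s)) = s.  If l <> 0, the algebra F[N] is
   reduced, so r s has odd order o, and r = (r s)^(o+1) s is obtained from s
   by repeatedly applying t |-> r (s t s) r; so r and s cannot lie in the
   two different blocks R and S of a decomposition. *)

Lemma pchar2_even_card (F : finFieldType) : ~~ odd #|F| -> 2 \in [pchar F].
Proof.
move=> evenF; have [p p_pr pcharFp] := finPcharP F.
have F_pgroup := abelem_pgroup (fin_ring_pchar_abelem pcharFp).
have : p.-nat 2 by apply: pnat_dvd F_pgroup; rewrite cardsT dvdn2.
by rewrite pnatE // => /eqP ->.
Qed.

Lemma unit_exp_period (R : finUnitRingType) (u : R) :
  u \is a GRing.unit -> exists2 d, (0 < d)%N & u ^+ d = 1.
Proof.
move=> Uu; pose U : {unit R} := FinRing.unit _ Uu.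
exists #[U]%g; first exact: order_gt0.
by rewrite -[u]/(val U) -FinRing.val_unitX expg_order.
Qed.

Lemma odd_exp_eq1 (R : pzRingType) (u : R) d :
  (0 < d)%N -> u ^+ d = 1 -> (forall k, u ^+ k.*2 = 1 -> u ^+ k = 1) ->
  exists2 o, odd o & u ^+ o = 1.
Proof.
move=> + + halve; elim/ltn_ind: d => d IH d_gt0 ud.
have [odd_d|even_d] := boolP (odd d); first by exists d.
have d_eq : d = (d./2).*2 by rewrite -{1}(odd_double_half d) (negbTE even_d).
apply: (IH d./2); last by apply: halve; rewrite -d_eq.
- by rewrite -divn2 ltn_Pdiv.
- by rewrite half_gt0; case: (d) d_gt0 even_d => [|[|]].
Qed.

Lemma rank1_mulmx_sandwich (F : fieldType) m n (A : 'M[F]_(m, n)) (X : 'M_(n, m)) :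
  \rank A = 1%N -> A *m X *m A = \tr (A *m X) *: A.
Proof.
move=> rkA; have := mulmx_base A; move: (col_base A) (row_base A); rewrite rkA.
move=> c d <-; rewrite -!mulmxA (mulmxA d) (mulmxA _ c) [d *m X *m c]mx11_scalar.
by rewrite mul_scalar_mx scalemxAr mxtrace_mulC /mxtrace big_ord1.
Qed.

Lemma unipotent_type21_conj (F : finFieldType) n (g x : 'M[F]_n) :
  g \in unitmx -> unipotent_type21 x -> unipotent_type21 (rtri g x).
Proof.
move=> Ug /andP[/eqP sqrA /eqP rkA]; rewrite /unipotent_type21.
have -> : rtri g x - 1%:M = g *m (x - 1%:M) *m invmx g.
  by rewrite /rtri mulmxBr mulmxBl mulmx1 mulmxV.
apply/andP; split; apply/eqP.
  rewrite -!mulmxA (mulmxA (invmx g)) mulVmx // mul1mx.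
  by rewrite (mulmxA (x - 1%:M)) sqrA mul0mx mulmx0.
by rewrite mxrankMfree ?row_free_unit ?unitmx_inv // eqmxMfull ?row_full_unit.
Qed.

Lemma sl_class_unipotent_type21 (F : finFieldType) n (x y : 'M[F]_n) :
  unipotent_type21 x -> y \in sl_class x -> unipotent_type21 y.
Proof.
move=> ux /imsetP[g]; rewrite inE => /eqP detg ->.
by apply: unipotent_type21_conj; rewrite // unitmxE detg unitr1.
Qed.

Section Pchar2Matrix.
Variables (F : fieldType) (n : nat).
Local Notation M := 'M[F]_n.+1.

Lemma mul_sqr0_cubic (A B : M) (l : F) :
  A ^+ 2 = 0 -> B ^+ 2 = 0 -> A * B * A = l *: A -> B * A * B = l *: B ->
  let N := A + B + A * B in N ^+ 3 = l *: N + l *: N ^+ 2.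
Proof.
rewrite !expr2 => AA BB ABA BAB N.
have AAl X : X * A * A = 0 by rewrite -mulrA AA mulr0.
have BBl X : X * B * B = 0 by rewrite -mulrA BB mulr0.
have ABAl X : X * A * B * A = l *: (X * A) by rewrite -!mulrA (mulrA A) ABA scalerAr.
have BABl X : X * B * A * B = l *: (X * B) by rewrite -!mulrA (mulrA B) BAB scalerAr.
rewrite !exprS expr0 mulr1 /N.
do 3 rewrite ?mulrDl ?mulrDr ?mulrA ?AA ?BB ?ABA ?BAB ?AAl ?BBl ?ABAl ?BABl
  ?mul0r -?scalerAl -?scalerAr.
move: (A * B) (B * A) => P Q; apply/matrixP=> i j; rewrite !mxE; ring.
Qed.

Hypothesis pchar2 : 2 \in [pchar F].

Lemma sqrrD_comm_pchar2 (x y : M) : x * y = y * x -> (x + y) ^+ 2 = x ^+ 2 + y ^+ 2.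
Proof.
have pchar2M : 2 \in [pchar M] by apply: (rmorph_pchar (@scalar_mx F n.+1)).
exact: (pFrobenius_autD_comm pchar2M).
Qed.

Lemma sqrr1D_pchar2 (x : M) : (1 + x) ^+ 2 = 1 + x ^+ 2.
Proof. by rewrite sqrrD_comm_pchar2 ?expr1n // mul1r mulr1. Qed.

Lemma sqr0_involutive (A : M) : A ^+ 2 = 0 -> (1 + A) ^+ 2 = 1.
Proof. by rewrite sqrr1D_pchar2 => ->; rewrite addr0. Qed.

Lemma cube0_exp4 (N : M) : N ^+ 3 = 0 -> (1 + N) ^+ 4 = 1.
Proof.
by move=> N3; rewrite (exprM _ 2 2) !sqrr1D_pchar2 -exprM (exprS _ 3) N3 mulr0 addr0.
Qed.

End Pchar2Matrix.

Section IdempotentSpan.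
Variables (F : fieldType) (n : nat) (E N : 'M[F]_n.+1) (l : F).
Hypotheses (EE : E * E = E) (EN : E * N = N) (NE : N * E = N).
Hypothesis NN : N ^+ 2 = l *: (E + N).

Lemma exp_1addr_span k : exists a b, (1 + N) ^+ k = 1 + (a *: E + b *: N).
Proof.
elim: k => [|k [a [b IH]]]; first by exists 0, 0; rewrite !scale0r !addr0.
exists (a + b * l), (a + b + b * l + 1).
rewrite exprSr IH !mulrDl !mulrDr !mul1r !mulr1 -!scalerAl EN -expr2 NN.
apply/matrixP=> i j; rewrite !mxE; ring.
Qed.

Hypotheses (pchar2 : 2 \in [pchar F]) (l_neq0 : l != 0).

Lemma scaled_idem_sqr0 c : (c *: E) ^+ 2 = 0 -> c *: E = 0.
Proof.
rewrite exprZn [E ^+ 2]expr2 EE => /eqP; rewrite scaler_eq0.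
by case/orP=> [|/eqP->]; rewrite ?scaler0 // expf_eq0 /= => /eqP->; rewrite scale0r.
Qed.

Lemma span_sqr_eq0 a b : (a *: E + b *: N) ^+ 2 = 0 -> a *: E + b *: N = 0.
Proof.
set z := a *: E + b *: N => z2.
suff [c zc] : exists c, z = c *: E by rewrite zc; apply: scaled_idem_sqr0; rewrite -zc.
have [b0|b0] := eqVneq b 0; first by exists a; rewrite /z b0 scale0r addr0.
have cbl : b ^+ 2 * l != 0 by rewrite mulf_neq0 ?expf_neq0.
have {}z2 : a ^+ 2 *: E + b ^+ 2 *: (l *: (E + N)) = 0.
  rewrite -z2 sqrrD_comm_pchar2 // ?exprZn ?[E ^+ 2]expr2 ?EE ?NN //.
  by rewrite -scalerAl -!scalerAr -scalerAl EN NE.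
pose c := - (a ^+ 2 + b ^+ 2 * l) / (b ^+ 2 * l).
have NcE : N = c *: E.
  apply: (scalerI cbl); rewrite scalerA mulrCA divff // mulr1.
  apply/matrixP=> i j; move/matrixP/(_ i j): z2; rewrite !mxE => z2.
  by rewrite -[LHS]subr0 -z2; ring.
by exists (a + b * c); rewrite /z NcE scalerA scalerDl.
Qed.

Lemma exp_double_eq1 k : (1 + N) ^+ k.*2 = 1 -> (1 + N) ^+ k = 1.
Proof.
rewrite -muln2 exprM; have [a [b ->]] := exp_1addr_span k.
rewrite sqrr1D_pchar2 // -{2}[1]addr0 => /addrI/span_sqr_eq0 ->.
by rewrite addr0.
Qed.

End IdempotentSpan.

(* l^-1 (N^2 - l N) is the unit of the algebra spanned by N and N^2.  Since
   l != 0, N is annihilated by the separable polynomial t (t^2 + l t + l), so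
   that algebra has no nonzero square-zero element. *)
Lemma cubic_exp_double_eq1 (F : fieldType) n (N : 'M[F]_n.+1) (l : F) :
  2 \in [pchar F] -> l != 0 -> N ^+ 3 = l *: N + l *: N ^+ 2 ->
  forall k, (1 + N) ^+ k.*2 = 1 -> (1 + N) ^+ k = 1.
Proof.
move=> pchar2 l_neq0 N3.
pose E := l^-1 *: (N ^+ 2 - l *: N).
have lE : l *: E = N ^+ 2 - l *: N by rewrite scalerA divff // scale1r.
have NE : N * E = N.
  by rewrite -scalerAr mulrBr -scalerAr -expr2 -exprS N3 addrK scalerA mulVf // scale1r.
have EN : E * N = N.
  by rewrite -scalerAl mulrBl -scalerAl -expr2 -exprSr N3 addrK scalerA mulVf // scale1r.
have EE : E * E = E.
  by rewrite {1}/E -scalerAl mulrBl -scalerAl expr2 -mulrA !NE -expr2.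
have NN : N ^+ 2 = l *: (E + N) by rewrite scalerDr lE subrK.
exact: exp_double_eq1 EE EN NE NN pchar2 l_neq0.
Qed.

Lemma sqr1_unit (R : unitRingType) (x : R) : x ^+ 2 = 1 -> x \is a GRing.unit.
Proof. by move=> xx; rewrite -(unitrX_pos _ (isT : 0 < 2)%N) xx unitr1. Qed.

Section Reflections.
Variables (R : pzRingType) (r s : R).
Hypothesis ss : s ^+ 2 = 1.

Lemma reflection_conj_rotation k :
  r * (s * ((r * s) ^+ k * s) * s) * r = (r * s) ^+ k.+2 * s.
Proof.
have ssK t : t * s * s = t by rewrite -mulrA -expr2 ss mulr1.
by rewrite !mulrA ssK -exprS -[_ * r]ssK -(mulrA _ r s) -exprSr.
Qed.

Lemma reflection_triple : r * (s * (r * s * r) * s) * r = (r * s) ^+ 4 * s.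
Proof.
by rewrite -reflection_conj_rotation expr2 !mulrA -(mulrA _ s s) -expr2 ss mulr1.
Qed.

Lemma reflections_conj (P : R -> Prop) :
  (forall t, P t -> P (r * t * r)) -> (forall t, P t -> P (s * t * s)) ->
  P s -> forall o, odd o -> (r * s) ^+ o = 1 -> P r.
Proof.
move=> Pr Ps Pss o odd_o rso.
have Pk k : P ((r * s) ^+ k.*2 * s).
  elim: k => [|k IH]; first by rewrite mul1r.
  by rewrite doubleS -reflection_conj_rotation; apply/Pr/Ps.
have half_o : (o.+1)./2.*2 = o.+1 by rewrite -[RHS]odd_double_half /= odd_o.
by have := Pk (o.+1)./2; rewrite half_o exprSr rso mul1r -mulrA -expr2 ss mulr1.
Qed.

End Reflections.

Section TransvectionClass.
Variables (F : finFieldType) (n : nat).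
Local Notation M := 'M[F]_n.+1.

Lemma unipotent_type21P (x : M) :
  unipotent_type21 x -> (x - 1) ^+ 2 = 0 /\ \rank (x - 1) = 1%N.
Proof. by case/andP=> /eqP + /eqP; rewrite mulmxE -expr2. Qed.

Lemma unipotent_type21_involutive (x : M) :
  2 \in [pchar F] -> unipotent_type21 x -> x ^+ 2 = 1.
Proof.
move=> pchar2 /unipotent_type21P[A2 _].
by rewrite -[x](addrNK 1) addrC sqr0_involutive.
Qed.

Lemma mul_unipotent_type21_cubic (r s : M) :
  unipotent_type21 r -> unipotent_type21 s ->
  exists l : F, (r * s - 1) ^+ 3 = l *: (r * s - 1) + l *: (r * s - 1) ^+ 2.
Proof.
move=> /unipotent_type21P[A2 rkA] /unipotent_type21P[B2 rkB].
set A := r - 1 in A2 rkA; set B := s - 1 in B2 rkB.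
have ABA := rank1_mulmx_sandwich B rkA; have BAB := rank1_mulmx_sandwich A rkB.
rewrite mxtrace_mulC in BAB; rewrite !mulmxE in ABA BAB.
exists (\tr (A * B)); have -> : r * s - 1 = A + B + A * B.
  rewrite /A /B mulrBl !mulrBr !mul1r mulr1; move: (r * s) => P.
  by apply/matrixP=> i j; rewrite !mxE; ring.
exact: mul_sqr0_cubic.
Qed.

Lemma mul_unipotent_type21_order (r s : M) :
  2 \in [pchar F] -> unipotent_type21 r -> unipotent_type21 s ->
  (r * s) ^+ 4 = 1 \/ exists2 o, odd o & (r * s) ^+ o = 1.
Proof.
move=> pchar2 ur us; have [l N3] := mul_unipotent_type21_cubic ur us.
have Urs : r * s \is a GRing.unit.
  by rewrite unitrMr !sqr1_unit ?unipotent_type21_involutive.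
have [d d_gt0 rsd] := unit_exp_period Urs.
have rsN : r * s = 1 + (r * s - 1) by rewrite addrC subrK.
rewrite rsN in rsd *; set N := r * s - 1 in N3 rsd *.
have [l0|l_neq0] := eqVneq l 0; [left | right].
  by apply: cube0_exp4; rewrite // N3 l0 !scale0r addr0.
apply: odd_exp_eq1 d_gt0 rsd _.
exact: cubic_exp_double_eq1 pchar2 l_neq0 N3.
Qed.

Lemma rtri_involutive (r t : M) : r ^+ 2 = 1 -> rtri r t = r * t * r.
Proof.
move=> rr; have Ur := sqr1_unit rr.
by rewrite /rtri !mulmxE -[invmx r]/(r^-1) -[r^-1]mul1r -rr expr2 mulrK.
Qed.

End TransvectionClass.

Lemma rack_act_closed (F : finFieldType) n (Y S : {set 'M[F]_n}) y t :
  rack_act Y S = S -> y \in Y -> t \in S -> rtri y t \in S.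
Proof. by move=> actS yY tS; rewrite -actS; apply: imset2_f. Qed.

Theorem mainTheorem14 (F : finFieldType) (n : nat) :
  ~~ odd #|F| -> (2 <= n)%N ->
  forall x : 'M[F]_n, x \in SL F n -> unipotent_type21 x ->
  ~ type_D (sl_class x).
Proof.
case: n => [|n] evenF // _ x _ ux.
move=> [R [S [RSX _ [[_ dRS _ _] [_ _ _ actS]] [r [s [rR sS]]]]]].
have pchar2 := pchar2_even_card evenF.
have uY y : y \in R :|: S -> unipotent_type21 y.
  by move=> yY; apply: sl_class_unipotent_type21 ux (subsetP RSX y yY).
have rY : r \in R :|: S by rewrite inE rR.
have sY : s \in R :|: S by rewrite inE sS orbT.
have [ur us] := (uY r rY, uY s sY).
have rr := unipotent_type21_involutive pchar2 ur.
have ss := unipotent_type21_involutive pchar2 us.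
case: (mul_unipotent_type21_order pchar2 ur us) => [rs4 | [o odd_o rso]].
  by rewrite !rtri_involutive // reflection_triple // rs4 mul1r eqxx.
have : r \in S.
  apply: (reflections_conj ss (P := fun t => t \in S) _ _ sS odd_o rso) => t tS;
    by rewrite -rtri_involutive //; apply: rack_act_closed actS _ tS.
by rewrite (disjointFr dRS rR).
Qed.
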